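(* For all integers $0\le k\le l$, the ideal $I_{l,k}=(h_{l,k,0},h_{l,k,1},\dots,h_{l,k,k})$ of $\mathbb{Z}[q,q^{-1}]$ is principal, generated by $g_{l,k}=\mathrm{GCD}(h_{l,k,0},\dots,h_{l,k,k})$.
   Context: In $\mathbb{Z}[q,q^{-1}]$ set $\{i\}_q=q^i-1$, $\{i\}_{q,n}=\{i\}_q\{i-1\}_q\cdots\{i-n+1\}_q$ (equal to $1$ for $n=0$), $\{n\}_q!=\{n\}_{q,n}$. For $0\le i\le k\le l$ set $h_{l,k,i}=\{l-i\}_{q,k-i}\,\{i\}_q!$. $(a_1,\dots,a_r)$ denotes the ideal generated by $a_1,\dots,a_r$; GCD is a greatest common divisor in the UFD $\mathbb{Z}[q,q^{-1}]$ (defined up to units $\pm q^j$). *)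

(* Z[q,q^-1] is modelled as the subring of the fraction field
   Frac(Z[q]) = {fraction {poly int}} consisting of elements p / q^n. *)
From HB Require Import structures.
From mathcomp Require Import all_boot all_order all_algebra.
From mathcomp Require Import fraction.
Set Implicit Arguments. Unset Strict Implicit. Unset Printing Implicit Defensive.
Import Order.TTheory GRing.Theory Num.Theory.
Local Open Scope ring_scope.

Definition Lfield := {fraction {poly int}}.
Notation tof := (@tofrac {poly int}).

Definition qbr (i : nat) : {poly int} := 'X^i - 1.
Definition qfall (i n : nat) : {poly int} := \prod_(j < n) qbr (i - j)%N.
Definition qfact (n : nat) : {poly int} := qfall n n.
Definition hlki (l k i : nat) : {poly int} := qfall (l - i)%N (k - i)%N * qfact i.

Definition inLaurent (x : Lfield) : Prop :=
  exists (p : {poly int}) (n : nat), x = tof p / tof ('X^n : {poly int}).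

Definition ldvd (a b : Lfield) : Prop := exists c, inLaurent c /\ b = a * c.

Definition inIlk (l k : nat) (x : Lfield) : Prop :=
  exists c : 'I_k.+1 -> Lfield, (forall i, inLaurent (c i)) /\
    x = \sum_(i < k.+1) c i * tof (hlki l k i).

Definition isGCDlk (l k : nat) (g : Lfield) : Prop :=
  inLaurent g /\ (forall i : 'I_k.+1, ldvd g (tof (hlki l k i))) /\
  (forall d, inLaurent d -> (forall i : 'I_k.+1, ldvd d (tof (hlki l k i))) -> ldvd d g).

From HB Require Import structures.
From mathcomp Require Import all_boot all_order all_algebra.
From mathcomp Require Import fraction cyclotomic.
From mathcomp Require Import ring zify.
From Stdlib Require Import Classical.
Import Order.TTheory GRing.Theory Num.Theory.

(* For 1 <= t <= l, {t}_q = q^t - 1 is the product of the cyclotomic Phi_d, d | t,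
   hence h_{l,k,i} = prod_{d <= l} Phi_d ^ hexp i d, where hexp i d counts the
   factors {t}_q of h_{l,k,i} with d | t.  Put g = prod_d Phi_d ^ (min_i hexp i d)
   and h_{l,k,i} = g * w_i.  The heart of the proof is that the cofactors w_i
   generate the unit ideal of Z[q]; then g lies in I_{l,k} and divides every
   generator, which makes g a GCD and I_{l,k} = (g') for every GCD g'. *)

Set Implicit Arguments. Unset Strict Implicit. Unset Printing Implicit Defensive.

Lemma count_multiples d a n : 0 < d ->
  \sum_(j < n) (d %| a + (n - j)) + a %/ d = (a + n) %/ d.
Proof.
move=> d_gt0; elim: n => [|n IHn]; first by rewrite big_ord0 addn0.
rewrite big_ord_recl /= subn0 addnS divnS // -IHn -addnA.
by congr (_ + (_ + _)); apply: eq_bigr => j _; rewrite /bump /= add1n subSS.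
Qed.

(* Adding i and l - i in base d produces a carry iff l mod d < i mod d. *)
Lemma carry_mod l i d : 0 < d -> i <= l ->
  (d <= i %% d + (l - i) %% d) = (l %% d < i %% d).
Proof.
move=> d_gt0 il.
have ltid : i %% d < d by rewrite ltn_mod.
have ltlid : (l - i) %% d < d by rewrite ltn_mod.
have lmod : l %% d = (i %% d + (l - i) %% d) %% d by rewrite modnDm subnKC.
case: (leqP d (i %% d + (l - i) %% d)) => carry; last first.
  by rewrite lmod modn_small //; lia.
have -> : l %% d = i %% d + (l - i) %% d - d.
  by rewrite lmod -{1}(subnK carry) modnDr modn_small //; lia.
lia.
Qed.

Section Exponents.
Variables l k : nat.
Hypothesis hkl : k <= l.

(* hexp i d is the number of factors {t}_q of h_{l,k,i} with d | t, i.e. the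
   multiplicity of the cyclotomic polynomial Phi_d in h_{l,k,i} (for d > 0). *)
Definition hexp (i d : nat) : nat :=
  \sum_(j < k - i) (d %| (l - i) - j) + \sum_(j < i) (d %| i - j).

(* The closed form of hexp: it depends on i only through the carry bit. *)
Lemma hexp_formula i d : 0 < d -> i <= k ->
  hexp i d + (l - k) %/ d + (l %% d < i %% d) = l %/ d.
Proof.
move=> d_gt0 ik; have il := leq_trans ik hkl.
have first_block : \sum_(j < k - i) (d %| (l - i) - j)
                 = \sum_(j < k - i) (d %| (l - k) + ((k - i) - j)).
  apply: eq_bigr => j _; have := ltn_ord j => ltj.
  by rewrite (_ : l - i - j = l - k + (k - i - j)) //; lia.
have second_block : \sum_(j < i) (d %| i - j) = \sum_(j < i) (d %| 0 + (i - j)).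
  by apply: eq_bigr => j _; rewrite add0n.
have C1 := count_multiples (l - k) (k - i) d_gt0.
have C2 := count_multiples 0 i d_gt0.
have C3 := divnD i (l - i) d_gt0.
rewrite div0n addn0 add0n in C2.
rewrite subnKC // carry_mod // in C3.
rewrite (_ : l - k + (k - i) = l - i) in C1; last by lia.
rewrite /hexp first_block second_block.
move: C1 C2 C3; set S1 := \sum_(j < k - i) _; set S2 := \sum_(j < i) _.
set b := (_ < _); lia.
Qed.

Lemma hexp_le i j d : 0 < d -> i <= k -> j <= k ->
  (l %% d < j %% d -> l %% d < i %% d) -> hexp i d <= hexp j d.
Proof.
move=> d_gt0 ik jk carry_ij.
move: (hexp_formula d_gt0 ik) (hexp_formula d_gt0 jk) carry_ij.
by case: (l %% d < j %% d); case: (l %% d < i %% d) => //=; lia.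
Qed.

Lemma succ_mod_carry x D : x %| D -> (l %% x).+1 < x ->
  l %% x < (l %% D).+1 %% x.
Proof.
move=> xD lt_x.
by rewrite -[(l %% D).+1]addn1 -modnDml (modn_dvdm l xD) (@modn_small (_ + 1)) ?addn1.
Qed.

(* Take the largest chain element D admitting a carry and i = (l mod D) + 1. *)
Lemma chain_minimizer n0 p : prime p -> exists2 i, i <= k & forall e,
  0 < n0 * p ^ e -> n0 * p ^ e <= l ->
  forall j, j <= k -> hexp i (n0 * p ^ e) <= hexp j (n0 * p ^ e).
Proof.
move=> p_pr.
pose carries (e : 'I_l.+1) := [&& 0 < n0 * p ^ e, n0 * p ^ e <= l &
  [exists j : 'I_k.+1, l %% (n0 * p ^ e) < j %% (n0 * p ^ e)]].
have carriesP e j : 0 < n0 * p ^ e -> n0 * p ^ e <= l -> j <= k ->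
    l %% (n0 * p ^ e) < j %% (n0 * p ^ e) ->
    exists2 e' : 'I_l.+1, nat_of_ord e' = e & carries e'.
  move=> x_gt0 xl jk lt_carry.
  have el : e < l.+1.
    have n0_gt0 : 0 < n0 by move: x_gt0; rewrite muln_gt0 => /andP[].
    rewrite ltnS; apply: leq_trans xl.
    by apply: leq_trans (ltnW (ltn_expl e (prime_gt1 p_pr))) _; rewrite leq_pmull.
  exists (Ordinal el) => //; rewrite /carries /= x_gt0 xl.
  by apply/existsP; exists (Ordinal (jk : j < k.+1)).
case: (pickP carries) => [e0 carries_e0 | no_carry]; last first.
  exists 0 => // e x_gt0 xl j jk; apply: hexp_le => // lt_carry.
  by have [e' _ /[!no_carry]] := carriesP e j x_gt0 xl jk lt_carry.
case: (@arg_maxnP _ e0 carries id carries_e0) => eD.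
move=> /and3P[D_gt0 Dl /existsP[j0 carry_j0]] maxD.
set D := n0 * p ^ eD in D_gt0 Dl carry_j0.
have ik : (l %% D).+1 <= k.
  by apply: leq_trans carry_j0 (leq_trans (leq_mod _ _) _); rewrite -ltnS.
exists (l %% D).+1 => // e x_gt0 xl j jk; apply: hexp_le => // lt_carry.
have [e' eE carries_e'] := carriesP e j x_gt0 xl jk lt_carry.
apply: succ_mod_carry.
  by rewrite /D dvdn_mul // dvdn_exp2l // -eE; apply: maxD.
by apply: leq_ltn_trans lt_carry _; rewrite ltn_mod.
Qed.

End Exponents.

Local Open Scope ring_scope.
Local Notation P := {poly int}.

Definition in_ideal2 (x y z : P) := exists u v, z = u * x + v * y.

Definition comaximal (x y : P) := in_ideal2 x y 1.

Lemma in_ideal2D x y z z' : in_ideal2 x y z -> in_ideal2 x y z' -> in_ideal2 x y (z + z').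
Proof.
move=> [u [v ->]] [u' [v' ->]]; exists (u + u'), (v + v').
by rewrite !mulrDl addrACA.
Qed.

Lemma in_ideal2M x y z c : in_ideal2 x y z -> in_ideal2 x y (c * z).
Proof. by move=> [u [v ->]]; exists (c * u), (c * v); rewrite mulrDr !mulrA. Qed.

Lemma in_ideal2_mulr x y a b z : in_ideal2 (x * a) (y * b) z -> in_ideal2 x y z.
Proof.
move=> [u [v ->]]; exists (u * a), (v * b).
by rewrite [x * a]mulrC [y * b]mulrC !mulrA.
Qed.

Lemma comaximal_sym x y : comaximal x y -> comaximal y x.
Proof. by move=> [u [v E]]; exists v, u; rewrite addrC. Qed.

Lemma comaximal_subl x y z : comaximal (x - z * y) y -> comaximal x y.
Proof. by move=> [u [v E]]; exists u, (v - u * z); rewrite E; ring. Qed.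

Lemma comaximal1r x : comaximal x 1.
Proof. by exists 0, 1; rewrite mul0r add0r mulr1. Qed.

Definition geomX (A c : nat) : P := \sum_(j < A) 'X^(c * j).

Lemma geomXD A B c : geomX (A + B) c = geomX A c + 'X^(c * A) * geomX B c.
Proof.
rewrite /geomX big_split_ord /= mulr_sumr; congr (_ + _).
by apply: eq_bigr => i _; rewrite mulnDr exprD.
Qed.

Lemma geomX0 c : geomX 0 c = 0.
Proof. by rewrite /geomX big_ord0. Qed.

Lemma geomX1 c : geomX 1 c = 1.
Proof. by rewrite /geomX big_ord1 muln0 expr0. Qed.

Lemma qbr_mul c A : qbr (c * A) = qbr c * geomX A c.
Proof.
elim: A => [|A IHA]; first by rewrite geomX0 muln0 /qbr expr0 subrr mulr0.
rewrite -addn1 geomXD geomX1 mulr1 mulrDr -IHA /qbr mulnDr muln1 exprD.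
by ring.
Qed.

(* For coprime A and B the geometric sums in q^c are comaximal
   (Euclid's algorithm on A and B, mirrored by comaximal_subl). *)
Lemma geomX_comaximal c A B : coprime A B -> comaximal (geomX A c) (geomX B c).
Proof.
move: {2}(A + B)%N (leqnn (A + B)) => n.
elim: n A B => [|n IHn] A B.
  by rewrite leqn0 addn_eq0 => /andP[/eqP-> /eqP->]; rewrite /coprime gcdn0.
move=> ABn cop.
case: (posnP A) => [A0|A_gt0].
  by move: cop; rewrite A0 /coprime gcd0n => /eqP->; rewrite geomX1; apply: comaximal1r.
case: (posnP B) => [B0|B_gt0].
  move: cop; rewrite B0 /coprime gcdn0 => /eqP->; rewrite geomX1.
  exact/comaximal_sym/comaximal1r.
wlog BA : A B A_gt0 B_gt0 ABn cop / (B <= A)%N.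
  move=> wlog_BA; case: (leqP B A) => [|/ltnW AB]; first exact: wlog_BA.
  by apply/comaximal_sym/wlog_BA; rewrite // 1?addnC // coprime_sym.
apply: (@comaximal_subl _ _ 'X^(c * (A - B))).
rewrite -{1}(subnK BA) geomXD addrK; apply: IHn.
  by rewrite subnK //; rewrite -ltnS (leq_trans _ ABn) //; lia.
by rewrite /coprime gcdnC -gcdnDr subnK // gcdnC.
Qed.

Lemma big_divisors (R : nzSemiRingType) (F : nat -> R) N n : (0 < n)%N -> (n < N)%N ->
  \prod_(d <- divisors n) F d = \prod_(d < N | (d %| n)%N) F d.
Proof.
move=> n_gt0 nN.
rewrite -(big_mkord (fun d => (d %| n)%N) F) -[RHS]big_filter.
suff -> : [seq i <- index_iota 0 N | (i %| n)%N] = divisors n by [].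
rewrite /index_iota subn0.
apply: (@irr_sorted_eq _ ltn); first exact: ltn_trans.
- exact: ltnn.
- by apply: sorted_filter; [exact: ltn_trans | exact: iota_ltn_sorted].
- exact: sorted_divisors_ltn.
move=> d; rewrite mem_filter mem_iota add0n -dvdn_divisors //.
by case dn: (d %| n)%N => //=; rewrite (leq_ltn_trans (dvdn_leq n_gt0 dn)).
Qed.

Lemma qbr_cyclotomic N n : (0 < n)%N -> (n < N)%N ->
  qbr n = \prod_(d < N | (d %| n)%N) 'Phi_d.
Proof. by move=> n_gt0 nN; rewrite -big_divisors // prod_Cyclotomic. Qed.

Lemma qbr_neq0 n : (0 < n)%N -> qbr n != 0.
Proof. by move=> n_gt0; rewrite monic_neq0 // /qbr -[1]/(1%:P) monicXnsubC. Qed.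

Lemma qbr_dvd a m : (a %| m)%N -> exists r, qbr m = qbr a * r.
Proof. by move=> am; exists (geomX (m %/ a) a); rewrite -qbr_mul mulnC divnK. Qed.

Lemma cyclotomic_dvd_qbr n : (0 < n)%N -> exists r, qbr n = 'Phi_n * r.
Proof.
move=> n_gt0; rewrite (qbr_cyclotomic n_gt0 (ltnSn n)) (bigD1 ord_max) /=.
  by eexists.
exact: dvdnn.
Qed.

Lemma cyclotomic_dvd_geomX n c : (0 < n)%N -> (0 < c)%N -> (c %| n)%N -> (c < n)%N ->
  exists r, geomX (n %/ c) c = 'Phi_n * r.
Proof.
move=> n_gt0 c_gt0 cn cn_lt.
have qbr_nc : qbr n = qbr c * geomX (n %/ c) c by rewrite -qbr_mul mulnC divnK.
have : qbr n = qbr c * \prod_(d < n.+1 | (d %| n)%N && ~~ (d %| c)%N) 'Phi_d.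
  rewrite (qbr_cyclotomic n_gt0 (ltnSn n)) (bigID (fun d : 'I_n.+1 => (d %| c)%N)) /=.
  rewrite (qbr_cyclotomic c_gt0 (leq_ltn_trans (dvdn_leq n_gt0 cn) (ltnSn n))).
  congr (_ * _); apply: eq_bigl => d; apply/idP/idP => [/andP[] //|dc].
  by rewrite dc (dvdn_trans dc cn).
rewrite qbr_nc => /(mulfI (qbr_neq0 c_gt0)) ->.
by rewrite (bigD1 ord_max) /= ?dvdnn ?gtnNdvd //; eexists.
Qed.

Lemma geomX_mod a A c : (a %| c)%N -> exists w, geomX A c = A%:R + qbr a * w.
Proof.
move=> ac; elim: A => [|A [w Hw]]; first by exists 0; rewrite geomX0 mulr0 addr0.
have [r Hr] := qbr_dvd (dvdn_mulr A ac).
exists (w + r); rewrite -addn1 geomXD geomX1 mulr1 Hw.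
have -> : 'X^(c * A) = qbr (c * A) + 1 by rewrite /qbr subrK.
by rewrite Hr natrD; ring.
Qed.

(* a and b lie on a common chain n0 * p^e, p prime: one of a/b, b/a is a prime power. *)
Definition same_chain (a b : nat) := exists n0 p e e',
  prime p /\ a = (n0 * p ^ e)%N /\ b = (n0 * p ^ e')%N.

Lemma same_chain_sym a b : same_chain a b -> same_chain b a.
Proof. by move=> [n0 [p [e [e' [p_pr [-> ->]]]]]]; exists n0, p, e', e. Qed.

(* If a | b and the prime r divides b/a, then r lies in (Phi_a, Phi_b):
   Phi_b divides geomX r (b/r), which is r modulo {a}_q, a multiple of Phi_a. *)
Lemma prime_in_cyclotomic_ideal a b r : (0 < a)%N -> (0 < b)%N -> (a %| b)%N ->
  prime r -> (r %| b %/ a)%N -> in_ideal2 'Phi_a 'Phi_b r%:R.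
Proof.
move=> a_gt0 b_gt0 ab r_pr r_dvd.
have rb : (r %| b)%N by apply: dvdn_trans r_dvd _; rewrite -{2}(divnK ab) dvdn_mulr.
pose c := (b %/ r)%N.
have bE : b = (c * r)%N by rewrite /c divnK.
have c_gt0 : (0 < c)%N by move: b_gt0; rewrite bE muln_gt0 => /andP[].
have cb : (c < b)%N by rewrite /c ltn_Pdiv ?prime_gt1.
have [y Hy] := cyclotomic_dvd_geomX b_gt0 c_gt0 (dvdn_div rb) cb.
rewrite (_ : (b %/ c)%N = r) in Hy; last by rewrite {1}bE mulKn.
have ac : (a %| c)%N.
  by rewrite /c -(divnK ab) mulnC -muln_divA // dvdn_mulr.
have [w Hw] := geomX_mod r ac.
have [s Hs] := cyclotomic_dvd_qbr a_gt0.
exists (- (s * w)), y.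
have -> : r%:R = 'Phi_b * y - 'Phi_a * s * w :> P by rewrite -Hy Hw Hs; ring.
ring.
Qed.

Lemma natr_polyC (n : nat) : (n%:R : P) = (Posz n)%:P.
Proof. by rewrite -polyC_natr natz. Qed.

(* If a | b and b/a is not a prime power, Phi_a and Phi_b are comaximal:
   two distinct primes dividing b/a both lie in (Phi_a, Phi_b). *)
Lemma cyclotomic_comaximal_dvd a b : (0 < a)%N -> (0 < b)%N -> (a %| b)%N ->
  ~ same_chain a b -> comaximal 'Phi_a 'Phi_b.
Proof.
move=> a_gt0 b_gt0 ab not_chain.
pose t := (b %/ a)%N.
have bE : b = (a * t)%N by rewrite /t mulnC divnK.
have t_gt0 : (0 < t)%N by move: b_gt0; rewrite bE muln_gt0 => /andP[].
have t_gt1 : (1 < t)%N.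
  rewrite ltn_neqAle t_gt0 andbT; apply/negP => /eqP t1; apply: not_chain.
  by exists a, 2%N, 0%N, 0%N; rewrite bE -t1 !muln1.
have pt_pr := pdiv_prime t_gt1.
have not_pnat : ~~ (pdiv t).-nat t.
  apply/negP => t_pnat; apply: not_chain.
  exists a, (pdiv t), 0%N, (logn (pdiv t) t).
  by rewrite expn0 muln1 -p_part part_pnat_id.
move: not_pnat; rewrite /pnat t_gt0 /= => /allPn[p' p'_in p'_not].
move: p'_in; rewrite mem_primes => /and3P[p'_pr _ p't].
have cop : coprime (pdiv t) p'.
  rewrite prime_coprime // dvdn_prime2 //.
  by apply: contra p'_not => /eqP->; rewrite inE.
have [u [v Huv]] := Bezoutz (Posz (pdiv t)) (Posz p').
have bezout : (1 : P) = u%:P * (pdiv t)%:R + v%:P * p'%:R.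
  rewrite !natr_polyC -!polyCM -polyCD Huv /gcdz /=.
  by move: cop; rewrite /coprime => /eqP->.
rewrite /comaximal bezout.
by apply: in_ideal2D; apply: in_ideal2M; apply: prime_in_cyclotomic_ideal;
  rewrite // pdiv_dvd.
Qed.

(* When
   neither divides the other, with g = gcd(a, b), Phi_a and Phi_b divide the
   comaximal geometric sums geomX (a/g) g and geomX (b/g) g. *)
Lemma cyclotomic_comaximal a b : (0 < a)%N -> (0 < b)%N -> ~ same_chain a b ->
  comaximal 'Phi_a 'Phi_b.
Proof.
move=> a_gt0 b_gt0 not_chain.
case ab: (a %| b)%N; first exact: cyclotomic_comaximal_dvd.
case ba: (b %| a)%N.
  by apply/comaximal_sym/cyclotomic_comaximal_dvd => // /same_chain_sym.
pose g := gcdn a b.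
have g_gt0 : (0 < g)%N by rewrite gcdn_gt0 a_gt0.
have ga : (g < a)%N.
  rewrite ltn_neqAle dvdn_leq ?dvdn_gcdl // andbT; apply/negP => /eqP ga.
  by move: (dvdn_gcdr a b); rewrite -/g ga ab.
have gb : (g < b)%N.
  rewrite ltn_neqAle dvdn_leq ?dvdn_gcdr // andbT; apply/negP => /eqP gb.
  by move: (dvdn_gcdl a b); rewrite -/g gb ba.
have [x Hx] := cyclotomic_dvd_geomX a_gt0 g_gt0 (dvdn_gcdl a b) ga.
have [y Hy] := cyclotomic_dvd_geomX b_gt0 g_gt0 (dvdn_gcdr a b) gb.
have cop : coprime (a %/ g) (b %/ g).
  by rewrite /coprime -(eqn_pmul2r g_gt0) mul1n muln_gcdl !divnK ?dvdn_gcdl ?dvdn_gcdr.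
by apply: (@in_ideal2_mulr _ _ x y); rewrite -Hx -Hy; apply: geomX_comaximal.
Qed.

Lemma same_chain_dvd a b : (0 < a)%N -> (a <= b)%N -> same_chain a b ->
  exists p e, prime p /\ b = (a * p ^ e)%N.
Proof.
move=> a_gt0 ab [n0 [p [e [e' [p_pr [aE bE]]]]]].
have n0_gt0 : (0 < n0)%N by move: a_gt0; rewrite aE muln_gt0 => /andP[].
have ee' : (e <= e')%N.
  by move: ab; rewrite aE bE leq_pmul2l // leq_exp2l // prime_gt1.
by exists p, (e' - e)%N; split => //; rewrite aE bE -mulnA -expnD subnKC.
Qed.

(* If no chain n0 * p^e contains all the positive integers d i, two of them
   do not lie on a common chain: otherwise all are d_min * p^e for the prime
   p with d_max = d_min * p^E, and the chain (d_min, p) would contain them all. *)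
Lemma off_chain_pair n (d : 'I_n -> nat) : (forall i, 0 < d i)%N ->
  (forall n0 p, prime p -> exists i, forall e, d i <> (n0 * p ^ e)%N) ->
  exists i j, ~ same_chain (d i) (d j).
Proof.
move=> d_gt0 no_chain; apply: NNPP => all_chain.
have chain i j : same_chain (d i) (d j).
  by apply: NNPP => off; apply: all_chain; exists i, j.
have [i _] := no_chain 1%N 2%N isT.
have [imin _ minP] := @arg_minnP _ i xpredT d isT.
have [imax _ maxP] := @arg_maxnP _ i xpredT d isT.
have [p [E [p_pr dmaxE]]] := same_chain_dvd (d_gt0 _) (minP imax isT) (chain _ _).
have [j off_j] := no_chain (d imin) p p_pr.
have [p2 [e2 [_ djE]]] := same_chain_dvd (d_gt0 _) (minP j isT) (chain _ _).
have [p3 [e3 [_ dmaxE']]] := same_chain_dvd (d_gt0 _) (maxP j isT) (chain _ _).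
have : (p2 ^ e2 %| p ^ E)%N.
  by rewrite -(@dvdn_pmul2l (d imin)) ?d_gt0 // -djE -dmaxE dmaxE' dvdn_mulr.
by case/(dvdn_pfactor _ _ p_pr) => f _ p2E; apply: (off_j f); rewrite djE p2E.
Qed.

Definition in_span n (u : 'I_n -> P) (z : P) := exists c : 'I_n -> P, z = \sum_i c i * u i.

Lemma in_span_gen n (u : 'I_n -> P) i : in_span u (u i).
Proof.
exists (fun j => (j == i)%:R).
by rewrite (bigD1 i) //= eqxx mul1r big1 ?addr0 // => j /negbTE->; rewrite mul0r.
Qed.

Lemma in_span0 n (u : 'I_n -> P) : in_span u 0.
Proof. by exists (fun _ => 0); rewrite big1 // => i _; rewrite mul0r. Qed.

Lemma in_spanD n (u : 'I_n -> P) x y : in_span u x -> in_span u y -> in_span u (x + y).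
Proof.
move=> [c ->] [c' ->]; exists (fun i => c i + c' i).
by rewrite -big_split; apply: eq_bigr => i _; rewrite mulrDl.
Qed.

Lemma in_spanM n (u : 'I_n -> P) x y : in_span u y -> in_span u (x * y).
Proof.
move=> [c ->]; exists (fun i => x * c i).
by rewrite mulr_sumr; apply: eq_bigr => i _; rewrite mulrA.
Qed.

Lemma in_span_mul_span n m (u : 'I_n -> P) (v : 'I_m -> P) x z :
  (forall j, in_span u (x * v j)) -> in_span v z -> in_span u (x * z).
Proof.
move=> xv [c ->]; rewrite mulr_sumr.
elim/big_ind: _ => [|y y'|j _]; [exact: in_span0 | exact: in_spanD |].
by rewrite mulrCA; apply: in_spanM.
Qed.

Lemma eq_in_span n (u v : 'I_n -> P) z : u =1 v -> in_span u z -> in_span v z.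
Proof. by move=> uv [c ->]; exists c; apply: eq_bigr => i _; rewrite uv. Qed.

Definition fupdate T n (u : 'I_n -> T) i (x : T) : 'I_n -> T :=
  fun j => if j == i then x else u j.

Lemma unit_span_mul n (u : 'I_n -> P) i a b :
  in_span (fupdate u i a) 1 -> in_span (fupdate u i b) 1 ->
  in_span (fupdate u i (a * b)) 1.
Proof.
move=> unit_a unit_b; set v := fupdate u i (a * b).
have vi : in_span v (a * b) by have := in_span_gen v i; rewrite /v /fupdate eqxx.
have vj j : j != i -> in_span v (u j).
  by move=> ji; have := in_span_gen v j; rewrite /v /fupdate (negbTE ji).
have va : in_span v a.
  rewrite -[a]mulr1; apply: (in_span_mul_span _ unit_b) => j; rewrite /fupdate.
  by case: eqP => [_|/eqP ji]; [exact: vi | exact/in_spanM/vj].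
rewrite -[1]mulr1; apply: (in_span_mul_span _ unit_a) => j; rewrite mul1r /fupdate.
by case: eqP => [_|/eqP ji]; [exact: va | exact: vj].
Qed.

Definition positive_seqs n (s : 'I_n -> seq nat) := forall i d, d \in s i -> (0 < d)%N.

Definition avoids_chains n (s : 'I_n -> seq nat) := forall n0 p, prime p ->
  exists i, forall d, d \in s i -> forall e, d <> (n0 * p ^ e)%N.

Lemma positive_seqs_sub n (s t : 'I_n -> seq nat) :
  (forall j, {subset t j <= s j}) -> positive_seqs s -> positive_seqs t.
Proof. by move=> ts s_pos i d /ts; apply: s_pos. Qed.

Lemma avoids_chains_sub n (s t : 'I_n -> seq nat) :
  (forall j, {subset t j <= s j}) -> avoids_chains s -> avoids_chains t.
Proof.
move=> ts s_avoids n0 p p_pr; have [i avoid_i] := s_avoids n0 p p_pr.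
by exists i => d /ts; apply: avoid_i.
Qed.

Lemma fupdate_sub n (s : 'I_n -> seq nat) i x : {subset x <= s i} ->
  forall j, {subset fupdate s i x j <= s j}.
Proof. by move=> xs j y; rewrite /fupdate; case: eqP => [->|//]; apply: xs. Qed.

Lemma size_fupdate n (s : 'I_n -> seq nat) i x :
  (\sum_j size (fupdate s i x j) + size (s i) = \sum_j size (s j) + size x)%N.
Proof.
rewrite (bigD1 i) //= [in RHS](bigD1 i) //= /fupdate eqxx.
rewrite (eq_bigr (fun j => size (s j))); first lia.
by move=> j /negbTE->.
Qed.

Definition cprods n (s : 'I_n -> seq nat) (i : 'I_n) : P := \prod_(d <- s i) 'Phi_d.

(* Base case: members with at most one cyclotomic factor.  Either one member
   is 1, or two members are Phi_a, Phi_b with a, b off a common chain. *)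
Lemma short_cprods_unit n (s : 'I_n -> seq nat) : positive_seqs s -> avoids_chains s ->
  (forall i, size (s i) <= 1)%N -> in_span (cprods s) 1.
Proof.
move=> s_pos s_avoids s_short.
case: (pickP (fun i => size (s i) == 0%N)) => [i /eqP/size0nil si_nil|s_ne0].
  by have := in_span_gen (cprods s) i; rewrite /cprods si_nil big_nil.
pose d j := head 0%N (s j).
have sE j : s j = [:: d j].
  by move: (s_short j) (s_ne0 j); rewrite /d; case: (s j) => [|x [|y t]].
have d_gt0 j : (0 < d j)%N by apply: (s_pos j); rewrite sE mem_seq1.
have [i [j off]] : exists i j, ~ same_chain (d i) (d j).
  apply: off_chain_pair => // n0 p p_pr.
  have [i avoid_i] := s_avoids n0 p p_pr.
  by exists i => e; apply: avoid_i; rewrite sE mem_seq1.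
have [u [v ->]] := cyclotomic_comaximal (d_gt0 i) (d_gt0 j) off.
have span_Phi m : in_span (cprods s) 'Phi_(d m).
  by have := in_span_gen (cprods s) m; rewrite /cprods sE big_seq1.
by apply: in_spanD; apply: in_spanM.
Qed.

(* Induction on the
   total number of factors: a member Phi_d * rest with at least two factors is
   split by unit_span_mul into the families with Phi_d resp. rest in its place,
   both of which still avoid every chain. *)
Lemma cprods_unit n (s : 'I_n -> seq nat) : positive_seqs s -> avoids_chains s ->
  in_span (cprods s) 1.
Proof.
move: {2}(\sum_i size (s i))%N (leqnn (\sum_i size (s i))) => m.
elim: m n s => [|m IHm] n s size_s s_pos s_avoids.
  apply: short_cprods_unit => // i; apply: leq_trans (leq_trans _ size_s) _ => //.
  by rewrite (bigD1 i) //= leq_addr.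
case: (pickP (fun i => 1 < size (s i))%N) => [i|short]; last first.
  by apply: short_cprods_unit => // i; move: (short i) => /negbT; rewrite -leqNgt.
case si: (s i) => [|d rest] //= rest_ne0.
have smaller x : {subset x <= s i} -> (size x < size (s i))%N ->
    in_span (cprods (fupdate s i x)) 1.
  move=> xs x_lt; apply: IHm.
  - rewrite -ltnS -(ltn_add2r (size (s i))) size_fupdate -addnS.
    exact: leq_add size_s x_lt.
  - exact: (positive_seqs_sub (fupdate_sub xs)).
  - exact: (avoids_chains_sub (fupdate_sub xs)).
have cprods_fupdate x : cprods (fupdate s i x) =1 fupdate (cprods s) i (\prod_(d <- x) 'Phi_d).
  by move=> j; rewrite /cprods /fupdate; case: eqP.
have unit_d : in_span (fupdate (cprods s) i (\prod_(d' <- [:: d]) 'Phi_d')) 1.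
  apply: eq_in_span (cprods_fupdate _) (smaller _ _ _); last by rewrite si.
  by move=> x; rewrite si mem_seq1 inE => ->.
have unit_rest : in_span (fupdate (cprods s) i (\prod_(d <- rest) 'Phi_d)) 1.
  apply: eq_in_span (cprods_fupdate _) (smaller _ _ _); last by rewrite si.
  by move=> x; rewrite si inE => ->; rewrite orbT.
apply: eq_in_span (unit_span_mul unit_d unit_rest) => j.
by rewrite /fupdate /cprods; case: eqP => // ->; rewrite big_seq1 si big_cons.
Qed.

Section Factorization.
Variables l k : nat.
Hypothesis hkl : (k <= l)%N.

Definition phi_prod (f : nat -> nat) : P := \prod_(d < l.+1) 'Phi_d ^+ f d.

Lemma eq_phi_prod f g : f =1 g -> phi_prod f = phi_prod g.
Proof. by move=> fg; apply: eq_bigr => d _; rewrite fg. Qed.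

Lemma phi_prodD f g : phi_prod f * phi_prod g = phi_prod (fun d => f d + g d)%N.
Proof. by rewrite /phi_prod -big_split; apply: eq_bigr => d _; rewrite exprD. Qed.

Lemma phi_prod_big n (F : 'I_n -> nat -> nat) :
  \prod_(j < n) phi_prod (F j) = phi_prod (fun d => \sum_(j < n) F j d)%N.
Proof.
elim: n F => [|n IHn] F.
  rewrite big_ord0 (eq_phi_prod (g := fun _ => 0%N)) => [|d]; last by rewrite big_ord0.
  by rewrite /phi_prod big1 // => d _; rewrite expr0.
rewrite big_ord_recr /= IHn phi_prodD; apply: eq_phi_prod => d.
by rewrite [in RHS]big_ord_recr.
Qed.

Lemma qbr_phi_prod t : (0 < t)%N -> (t <= l)%N -> qbr t = phi_prod (fun d => (d %| t)%N).
Proof.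
move=> t_gt0 tl; rewrite (qbr_cyclotomic t_gt0 (tl : (t < l.+1)%N)) big_mkcond.
by apply: eq_bigr => d _; case: (d %| t)%N; rewrite ?expr1 ?expr0.
Qed.

Lemma hlki_phi_prod i : (i <= k)%N -> hlki l k i = phi_prod (hexp l k i).
Proof.
move=> ik; rewrite /hlki /qfact /qfall.
rewrite (eq_bigr (fun j : 'I_(k - i) => phi_prod (fun d => (d %| l - i - j)%N))); last first.
  by move=> j _; apply: qbr_phi_prod; have := ltn_ord j; lia.
rewrite [X in _ * X](eq_bigr (fun j : 'I_i => phi_prod (fun d => (d %| i - j)%N))); last first.
  by move=> j _; apply: qbr_phi_prod; have := ltn_ord j; lia.
by rewrite !phi_prod_big phi_prodD.
Qed.

Lemma hexp0 i : (i <= k)%N -> hexp l k i 0 = 0%N.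
Proof. by move=> ik; rewrite /hexp !big1 // => j _; rewrite dvd0n; have := ltn_ord j; lia. Qed.

Definition hexp_min (d : nat) : nat :=
  hexp l k [arg min_(i < (ord0 : 'I_k.+1)) hexp l k i d] d.

Lemma hexp_min_le (i : 'I_k.+1) d : (hexp_min d <= hexp l k i d)%N.
Proof. by rewrite /hexp_min; case: arg_minnP => // j _; apply. Qed.

Definition phi_seq (f : nat -> nat) : seq nat :=
  flatten [seq nseq (f d) d | d <- iota 0 l.+1].

Lemma phi_seq_prod f : \prod_(d <- phi_seq f) 'Phi_d = phi_prod f.
Proof.
rewrite /phi_seq (_ : iota 0 l.+1 = index_iota 0 l.+1); last by rewrite /index_iota subn0.
rewrite big_flatten big_map big_mkord; apply: eq_bigr => d _.
by rewrite big_nseq; elim: (f d) => //= n ->; rewrite exprS.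
Qed.

Lemma mem_phi_seq f x : (x \in phi_seq f) = (x < l.+1)%N && (0 < f x)%N.
Proof.
apply/flatten_mapP/andP => [[d]|[xl fx]].
  by rewrite mem_iota add0n mem_nseq => dl /andP[fd /eqP->].
by exists x; rewrite ?mem_iota ?add0n ?mem_nseq ?fx ?eqxx.
Qed.

(* The core of Proposition 4.3 in Z[q]: h_{l,k,i} = g * w_i where the
   cofactors w_i = prod_d Phi_d ^ (hexp i d - hexp_min d) generate the unit
   ideal.  Their index family avoids every chain by chain_minimizer. *)
Lemma cofactors_comaximal : exists (g : P) (w c : 'I_k.+1 -> P),
  (forall i : 'I_k.+1, hlki l k i = g * w i) /\ \sum_i c i * w i = 1.
Proof.
pose f (i : 'I_k.+1) d := (hexp l k i d - hexp_min d)%N.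
have f_pos i d : (0 < f i d)%N -> (0 < d)%N.
  by case: d => //; rewrite /f hexp0 // -ltnS.
have s_pos : positive_seqs (fun i => phi_seq (f i)).
  by move=> i d; rewrite mem_phi_seq => /andP[_ /f_pos].
have s_avoids : avoids_chains (fun i => phi_seq (f i)).
  move=> n0 p p_pr; have [i ik i_min] := chain_minimizer hkl n0 p_pr.
  exists (Ordinal (ik : (i < k.+1)%N)) => x; rewrite mem_phi_seq => /andP[xl fx] e xE.
  have x_gt0 : (0 < x)%N := f_pos _ _ fx.
  move: fx; rewrite /f subn_gt0 ltnNge => /negP; apply.
  rewrite /hexp_min; case: arg_minnP => // j _ _.
  have jk : (j <= k)%N by rewrite -ltnS ltn_ord.
  have chain_gt0 : (0 < n0 * p ^ e)%N by rewrite -xE.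
  have chain_le : (n0 * p ^ e <= l)%N by rewrite -xE -ltnS.
  by rewrite (_ : nat_of_ord _ = i) // xE; apply: i_min.
have [c unit] := cprods_unit s_pos s_avoids.
exists (phi_prod hexp_min), (fun i => phi_prod (f i)), c; split.
  move=> i; rewrite hlki_phi_prod -1?ltnS // phi_prodD; apply: eq_phi_prod => d.
  by rewrite /f subnKC // hexp_min_le.
by rewrite [RHS]unit; apply: eq_bigr => i _; rewrite /cprods phi_seq_prod.
Qed.

End Factorization.

Lemma inLaurent_tof p : inLaurent (tof p).
Proof. by exists p, 0%N; rewrite expr0 tofrac1 divr1. Qed.

Lemma inLaurentM x y : inLaurent x -> inLaurent y -> inLaurent (x * y).
Proof.
move=> [p [n ->]] [p' [n' ->]]; exists (p * p'), (n + n')%N.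
by rewrite exprD !tofracM mulrACA invfM.
Qed.

Lemma inLaurentD x y : inLaurent x -> inLaurent y -> inLaurent (x + y).
Proof.
move=> [p [n ->]] [p' [n' ->]]; exists (p * 'X^n' + p' * 'X^n), (n + n')%N.
have Xn_neq0 m : tof ('X^m : {poly int}) != 0 by rewrite tofrac_eq0 monic_neq0 ?monicXn.
by rewrite addf_div ?Xn_neq0 // exprD !tofracM tofracD !tofracM.
Qed.

Lemma inLaurent_sum n (f : 'I_n -> Lfield) : (forall i, inLaurent (f i)) ->
  inLaurent (\sum_i f i).
Proof.
move=> f_laurent; elim/big_ind: _ => //; last exact: inLaurentD.
by rewrite -tofrac0; apply: inLaurent_tof.
Qed.

Definition in_laurent_ideal n (h : 'I_n -> Lfield) (x : Lfield) : Prop :=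
  exists c : 'I_n -> Lfield, (forall i, inLaurent (c i)) /\ x = \sum_i c i * h i.

Definition is_laurent_gcd n (h : 'I_n -> Lfield) (g : Lfield) : Prop :=
  inLaurent g /\ (forall i, ldvd g (h i)) /\
  (forall d, inLaurent d -> (forall i, ldvd d (h i)) -> ldvd d g).

Lemma ldvd_ideal n (h : 'I_n -> Lfield) d x :
  (forall i, ldvd d (h i)) -> in_laurent_ideal h x -> ldvd d x.
Proof.
move=> d_dvd [c [c_laurent ->]].
have [e e_spec] := fin_all_exists d_dvd.
exists (\sum_i c i * e i); split.
  by apply: inLaurent_sum => i; apply: inLaurentM => //; case: (e_spec i).
rewrite mulr_sumr; apply: eq_bigr => i _.
by case: (e_spec i) => _ ->; rewrite mulrCA.
Qed.

Lemma in_laurent_idealM n (h : 'I_n -> Lfield) x t :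
  in_laurent_ideal h x -> inLaurent t -> in_laurent_ideal h (x * t).
Proof.
move=> [c [c_laurent ->]] t_laurent; exists (fun i => c i * t); split.
  by move=> i; apply: inLaurentM.
by rewrite mulr_suml; apply: eq_bigr => i _; rewrite mulrAC.
Qed.

Lemma gcd_in_ideal_principal n (h : 'I_n -> Lfield) g :
  inLaurent g -> (forall i, ldvd g (h i)) -> in_laurent_ideal h g ->
  is_laurent_gcd h g /\
  forall g', is_laurent_gcd h g' -> forall x, in_laurent_ideal h x <-> ldvd g' x.
Proof.
move=> g_laurent g_dvd g_in; split.
  by do 2!split=> //; move=> d _ /ldvd_ideal; apply.
move=> g' [_ [g'_dvd g'_max]] x; split; first exact: ldvd_ideal.
have [s [s_laurent ->]] := g'_max g g_laurent g_dvd.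
move=> [t [t_laurent ->]]; rewrite -mulrA.
by apply: in_laurent_idealM => //; apply: inLaurentM.
Qed.

Unset Implicit Arguments.

Theorem proposition4p3 (l k : nat) (hkl : (k <= l)%N) :
  (exists g, isGCDlk l k g) /\
  (forall g, isGCDlk l k g ->
     forall x, inLaurent x -> (inIlk l k x <-> ldvd g x)).
Proof.
have [g [w [c [hE unit]]]] := cofactors_comaximal hkl.
pose h (i : 'I_k.+1) := tof (hlki l k i).
have g_dvd i : ldvd (tof g) (h i).
  by exists (tof (w i)); rewrite /h hE tofracM; split; first exact: inLaurent_tof.
have g_in : in_laurent_ideal h (tof g).
  exists (fun i => tof (c i)); split=> [i|]; first exact: inLaurent_tof.
  rewrite -[g]mulr1 -unit mulr_sumr rmorph_sum; apply: eq_bigr => i _.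
  by rewrite /h hE -tofracM mulrCA.
have [g_gcd principal] := gcd_in_ideal_principal (inLaurent_tof g) g_dvd g_in.
split; first by exists (tof g).
by move=> g' g'_gcd x _; apply: principal.
Qed.
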